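(* Let $x\in\mathcal{X}$, $\delta\in[0,1]$ and $x'=\eta(x,\delta)$. Then $x'\in\mathcal{X}$ and $\|x'-x\|\le\delta$, with strict inequality when $\delta>0$. Furthermore, when $\delta>0$, $x'\notin\partial\mathcal{X}$.
   Context: Fix $D\ge1$, Euclidean norm $\|\cdot\|$ on $\mathbb{R}^D$. For $A\subseteq\mathbb{R}^D$ let $d(z,A)=\inf_{a\in A}\|z-a\|$, $\mathrm{Med}(A)=\{z:\exists p\neq q\in A,\ \|p-z\|=\|q-z\|=d(z,A)\}$, and reach $\tau_A=\inf_{a\in A}d(a,\mathrm{Med}(A))$. Let $\mathcal{X}'\subset\mathbb{R}^D$ be nonempty compact with reach $\tau_{\mathcal{X}'}>0$, fix $0<\epsilon_I<\min\{\tau_{\mathcal{X}'},1\}$, and set $\mathcal{X}=\{x\in\mathbb{R}^D:d(x,\mathcal{X}')\le\epsilon_I\}$. Let $\zeta\colon\mathcal{X}\to\mathcal{X}'$ map $x$ to the (unique) point $\zeta(x)\in\mathcal{X}'$ with $\|x-\zeta(x)\|=d(x,\mathcal{X}')$, and define $\eta\colon\mathcal{X}\times[0,1]\to\mathbb{R}^D$ by $\eta(x,\delta)=x+\delta(\zeta(x)-x)$. *)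

From HB Require Import structures.
From mathcomp Require Import all_boot all_order all_algebra.
From mathcomp Require Import all_classical all_reals all_analysis.
Set Implicit Arguments. Unset Strict Implicit. Unset Printing Implicit Defensive.
Import Order.TTheory GRing.Theory Num.Theory.
Import numFieldNormedType.Exports.
Local Open Scope classical_set_scope.
Local Open Scope ring_scope.

Definition enorm {R : realType} {D : nat} (v : 'rV[R]_D) : R :=
  Num.sqrt (\sum_(i < D) (v ord0 i) ^+ 2).

(* d(z, A) = inf_{a in A} ||z - a||, extended-real valued (+oo for A empty) *)
Definition setdist {R : realType} {D : nat} (z : 'rV[R]_D) (A : set 'rV[R]_D)
  : \bar R := ereal_inf [set (enorm (z - a))%:E | a in A].

Definition Med {R : realType} {D : nat} (A : set 'rV[R]_D) : set 'rV[R]_D :=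
  [set z | exists p q, [/\ A p, A q, p != q,
     (enorm (p - z))%:E = setdist z A & (enorm (q - z))%:E = setdist z A]].

Definition reach {R : realType} {D : nat} (A : set 'rV[R]_D) : \bar R :=
  ereal_inf [set setdist a (Med A) | a in A].

Definition tube {R : realType} {D : nat} (A : set 'rV[R]_D) (eps : R)
  : set 'rV[R]_D := [set x | (setdist x A <= eps%:E)%E].

Definition boundary {R : realType} {D : nat} (A : set 'rV[R]_D) : set 'rV[R]_D :=
  closure A `\` interior A.

Definition eta_map {R : realType} {D : nat} (zeta : 'rV[R]_D -> 'rV[R]_D)
  (x : 'rV[R]_D) (delta : R) : 'rV[R]_D := x + delta *: (zeta x - x).

(* Moving x towards its projection z = zeta x scales both distances
   |x' - x| = delta |x - z| and |x' - z| = (1 - delta) |x - z|; since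
   |x - z| = d(x, X') <= epsI < 1 this gives the two bounds.  For delta > 0 the
   point x' lies in the open Euclidean ball of radius epsI around z, an open set
   contained in the tube, so x' is interior to the tube. *)
From HB Require Import structures.
From mathcomp Require Import all_boot all_order all_algebra.
From mathcomp Require Import all_classical all_reals all_analysis.
From mathcomp Require Import ring.

Set Implicit Arguments.
Unset Strict Implicit.
Unset Printing Implicit Defensive.

Import Order.TTheory GRing.Theory Num.Theory.
Import numFieldNormedType.Exports.
Local Open Scope classical_set_scope.
Local Open Scope ring_scope.

Section euclidean_norm.
Variables (R : realType) (D : nat).
Implicit Types (v z : 'rV[R]_D) (c e : R).

Lemma enorm_ge0 v : 0 <= enorm v.
Proof. exact: sqrtr_ge0. Qed.

Lemma enormZ c v : enorm (c *: v) = `|c| * enorm v.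
Proof.
rewrite /enorm (eq_bigr (fun i => c ^+ 2 * v ord0 i ^+ 2)).
  by rewrite -mulr_sumr sqrtrM ?sqr_ge0 // sqrtr_sqr.
by move=> i _; rewrite mxE exprMn.
Qed.

Lemma enorm_continuous : continuous (@enorm R D).
Proof.
have sum_cont : continuous (fun w : 'rV[R]_D => \sum_(i < D) w ord0 i ^+ 2).
  apply: (@continuous_big _ _ +%R 0 xpredT add_continuous) => i _ w.
  apply: (@continuous_comp _ _ _ (fun M : 'rV[R]_D => M ord0 i) (fun r : R => r ^+ 2)).
    exact: coord_continuous.
  exact: exprn_continuous.
move=> v; apply: (@continuous_comp _ _ _ _ Num.sqrt); first exact: sum_cont.
exact: sqrt_continuous.
Qed.

Lemma open_enorm_lt z e : open [set y | enorm (y - z) < e].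
Proof.
have /= := @open_comp _ R (fun y : 'rV[R]_D => enorm (y - z)) [set r | r < e].
apply; last exact: open_lt.
move=> y _; apply: (continuous_comp (f := fun w : 'rV[R]_D => w - z)).
  exact: (cvgB cvg_id (cvg_cst z)).
exact: enorm_continuous.
Qed.

End euclidean_norm.

Section tube.
Variables (R : realType) (D : nat) (A : set 'rV[R]_D).

Lemma setdist_le_enorm y {z} : A z -> (setdist y A <= (enorm (y - z))%:E)%E.
Proof. by move=> Az; apply: ereal_inf_lbound; exists z. Qed.

Lemma interior_tube z e {y} : A z -> enorm (y - z) < e -> (tube A e)° y.
Proof.
move=> Az yz; apply: (@filterS _ _ _ [set y | enorm (y - z) < e]).
  move=> w /ltW wz.
  by rewrite /tube /= (le_trans (setdist_le_enorm w Az)) ?lee_fin.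
by apply: open_nbhs_nbhs; split; [exact: open_enorm_lt | exact: yz].
Qed.

End tube.

Section eta_map.
Variables (R : realType) (D : nat) (zeta : 'rV[R]_D -> 'rV[R]_D).
Variables (x : 'rV[R]_D) (delta : R).

Lemma enorm_eta_map_subx : 0 <= delta ->
  enorm (eta_map zeta x delta - x) = delta * enorm (x - zeta x).
Proof.
move=> delta_ge0.
have -> : eta_map zeta x delta - x = (- delta) *: (x - zeta x).
  by apply/rowP => i; rewrite /eta_map !mxE; ring.
by rewrite enormZ normrN ger0_norm.
Qed.

Lemma enorm_eta_map_subzeta : delta <= 1 ->
  enorm (eta_map zeta x delta - zeta x) = (1 - delta) * enorm (x - zeta x).
Proof.
move=> delta_le1.
have -> : eta_map zeta x delta - zeta x = (1 - delta) *: (x - zeta x).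
  by apply/rowP => i; rewrite /eta_map !mxE; ring.
by rewrite enormZ ger0_norm // subr_ge0.
Qed.

End eta_map.

Theorem lemma1 (R : realType) (D : nat) (X' : set 'rV[R]_D) (epsI : R)
  (zeta : 'rV[R]_D -> 'rV[R]_D) (x : 'rV[R]_D) (delta : R) :
  (0 < D)%N ->
  X' !=set0 -> compact X' -> (0 < reach X')%E ->
  0 < epsI -> (epsI%:E < reach X')%E -> epsI < 1 ->
  (forall y, tube X' epsI y ->
     X' (zeta y) /\ (enorm (y - zeta y))%:E = setdist y X') ->
  tube X' epsI x -> 0 <= delta <= 1 ->
  let x' := eta_map zeta x delta in
  [/\ tube X' epsI x',
      enorm (x' - x) <= delta &
      0 < delta -> enorm (x' - x) < delta /\ ~ boundary (tube X' epsI) x'].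
Proof.
move=> _ _ _ _ eps_gt0 _ eps_lt1 proj_zeta tube_x /andP[delta_ge0 delta_le1] x'.
have [X'zeta dist_zeta] := proj_zeta x tube_x.
have x'x := enorm_eta_map_subx zeta x delta_ge0.
have x'zeta := enorm_eta_map_subzeta zeta x delta_le1.
set e := enorm (x - zeta x) in dist_zeta x'x x'zeta.
have e_ge0 : 0 <= e := enorm_ge0 _.
have e_le_eps : e <= epsI by rewrite -lee_fin dist_zeta.
have e_lt1 : e < 1 := le_lt_trans e_le_eps eps_lt1.
split.
- apply: le_trans (setdist_le_enorm x' X'zeta) _.
  by rewrite lee_fin x'zeta (le_trans (ler_piMl e_ge0 _) e_le_eps) // gerBl.
- by rewrite x'x ler_piMr // ltW.
move=> delta_gt0; split; first by rewrite x'x gtr_pMr.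
case=> _; apply; apply: interior_tube X'zeta _.
rewrite x'zeta; apply: le_lt_trans (ler_wpM2l _ e_le_eps) _; first by rewrite subr_ge0.
by rewrite gtr_pMl // gtrBl.
Qed.
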